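(* Let $\mathcal{H}_S$ (system) and $\mathcal{H}_B$ (bath) be Hilbert spaces (with all traces below finite, e.g. finite-dimensional). Let $H_S(s)$, $s\in[0,t]$, be a (possibly time-dependent) self-adjoint system Hamiltonian, $H_B$ a time-independent self-adjoint bath Hamiltonian, and $U_t$ any unitary on $\mathcal{H}_S\otimes\mathcal{H}_B$. Fix $\beta>0$ and set $Z_S(s)={\rm Tr}[e^{-\beta H_S(s)}]$, $\tau_S(s)=e^{-\beta H_S(s)}/Z_S(s)$, $Z_B={\rm Tr}[e^{-\beta H_B}]$, $\tau_B=e^{-\beta H_B}/Z_B$, $F_S(s)=-\beta^{-1}\ln Z_S(s)$, $\Delta F_S=F_S(t)-F_S(0)$. Let $\{|\epsilon\rangle\}$ be an orthonormal eigenbasis of $H_S(0)$ with eigenvalues $\epsilon$. Define $\Phi_t(\rho)={\rm Tr}_B[U_t(\rho\otimes\tau_B)U_t^\dagger]$, $\tilde Z_S(t)=\sum_\epsilon e^{-\beta{\rm Tr}[H_S(t)\Phi_t(|\epsilon\rangle\langle\epsilon|)]}$, $$\Theta_{SB}(t)=\sum_\epsilon \frac{e^{-\beta{\rm Tr}[H_S(t)\Phi_t(|\epsilon\rangle\langle\epsilon|)]}}{\tilde Z_S(t)}\,U_t(|\epsilon\rangle\langle\epsilon|\otimes\tau_B)U_t^\dagger,\qquad \tilde\rho_S(t)={\rm Tr}_B[\Theta_{SB}(t)],$$ the guessed quantum heat $\langle\tilde Q\rangle_B={\rm Tr}[H_B\tau_B]-{\rm Tr}[(\mathbb{1}_S\otimes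 H_B)\Theta_{SB}(t)]$, the average internal energy change $\langle\Delta E\rangle={\rm Tr}[H_S(t)\Phi_t(\tau_S(0))]-{\rm Tr}[H_S(0)\tau_S(0)]$, and the average guessed quantum work $\langle\tilde W\rangle=\langle\Delta E\rangle-\langle\tilde Q\rangle_B$. Then $$\langle\tilde W\rangle\ \ge\ \Delta F_S+\beta^{-1}D[\tilde\rho_S(t)\|\tau_S(t)],$$ where $D[\rho\|\sigma]={\rm Tr}[\rho\ln\rho]-{\rm Tr}[\rho\ln\sigma]$ is the quantum relative entropy.
   Context: $\langle\Delta E\rangle$ equals the average of $\Delta\tilde E(\epsilon)={\rm Tr}[H_S(t)\Phi_t(|\epsilon\rangle\langle\epsilon|)]-\epsilon$ with weights $e^{-\beta\epsilon}/Z_S(0)$. $\Theta_{SB}(t)$ is called the best possible guessed state and $\tilde\rho_S(t)$ its reduced system state. *)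

(* complex matrices over C := R[i] (R : realType),
   finite-dimensional Hilbert spaces C^n (system) and C^m (bath). *)
From HB Require Import structures.
From mathcomp Require Import all_boot all_order all_algebra.
From mathcomp Require Import sesquilinear spectral.
From mathcomp Require Import complex mxtens.
From mathcomp Require Import boolp reals sequences exp.

Set Implicit Arguments.
Unset Strict Implicit.
Unset Printing Implicit Defensive.

Import GRing.Theory Num.Theory.
Local Open Scope ring_scope.
Local Open Scope sesquilinear_scope.

Section QDefs.
Context {R : realType}.
Local Notation C := (complex R).

Definition rC (x : R) : C := Complex x 0.

Definition selfadjmx {n} (A : 'M[C]_n) : bool := A ^t* == A.

(* real part of the trace (all traces used below are traces of products
   of self-adjoint operators, hence real) *)
Definition rtr {n} (A : 'M[C]_n) : R := complex.Re (\tr A).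

(* Functional calculus for self-adjoint matrices: if A = U^* diag(d) U with
   U unitary and d real, then f(A) := U^* diag(f d) U.  (The value does not
   depend on the chosen spectral decomposition.)  Returns 0 if A has no such
   decomposition, i.e. is not self-adjoint. *)
Definition mfun {n} (f : R -> R) (A : 'M[C]_n) : 'M[C]_n :=
  match pselect (exists p : 'M[C]_n * 'rV[R]_n,
          p.1 \is unitarymx /\
          A = p.1 ^t* *m diag_mx (map_mx rC p.2) *m p.1) with
  | left h => let p := projT1 (cid h) in
              p.1 ^t* *m diag_mx (map_mx (fun x => rC (f x)) p.2) *m p.1
  | right _ => 0
  end.

Definition expmx {n} (beta : R) (H : 'M[C]_n) : 'M[C]_n :=
  mfun (fun x => expR (- beta * x)) H.

Definition partfun {n} (beta : R) (H : 'M[C]_n) : R := rtr (expmx beta H).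

Definition gibbs {n} (beta : R) (H : 'M[C]_n) : 'M[C]_n :=
  rC (partfun beta H)^-1 *: expmx beta H.

Definition free_energy {n} (beta : R) (H : 'M[C]_n) : R :=
  - beta^-1 * ln (partfun beta H).

(* partial trace over the bath (second tensor factor, convention of tensmx) *)
Definition ptraceB {n m} (X : 'M[C]_(n * m)) : 'M[C]_n :=
  \matrix_(i, j) \sum_(k < m) X (mxtens_index (i, k)) (mxtens_index (j, k)).

Definition channel {n m} (U : 'M[C]_(n * m)) (tauB : 'M[C]_m)
    (rho : 'M[C]_n) : 'M[C]_n :=
  ptraceB (U *m (rho *t tauB) *m U ^t*).

(* quantum relative entropy D[rho||sigma] = Tr[rho ln rho] - Tr[rho ln sigma]
   (ln via functional calculus; ln 0 = 0, i.e. the convention 0 ln 0 = 0) *)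
Definition relent {n} (rho sigma : 'M[C]_n) : R :=
  rtr (rho *m mfun (@ln R) rho) - rtr (rho *m mfun (@ln R) sigma).

Definition ketbra {n} (v : 'cV[C]_n) : 'M[C]_n := v *m v ^t*.

End QDefs.

From HB Require Import structures.
From mathcomp Require Import all_boot all_order all_algebra.
From mathcomp Require Import sesquilinear spectral.
From mathcomp Require Import complex mxtens.
From mathcomp Require Import boolp reals sequences exp.
From mathcomp Require Import ring lra.

Set Implicit Arguments.
Unset Strict Implicit.
Unset Printing Implicit Defensive.

Import Order.TTheory GRing.Theory Num.Theory.
Local Open Scope ring_scope.
Local Open Scope sesquilinear_scope.

(** Multiplying by beta, the inequality is the sum of two relative-entropy
    inequalities: Klein's inequality D[Theta || rhotil (x) tau_B] >= 0, and
    Gibbs' inequality D[p || q] >= 0 between the initial thermal populations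
    p_eps = e^{-beta eps} / Z_S(0) and the guessed populations
    q_eps = e^{-beta Tr[H_S(t) Phi_t(|eps><eps|)]} / Ztil_S(t).
    Since Theta = U (sum_eps q_eps |eps><eps| (x) tau_B) U^dagger, its entropy
    splits into those of q and tau_B; writing
    ln (rhotil (x) tau_B) = ln rhotil (x) 1 + 1 (x) (- beta H_B - ln Z_B)
    makes the guessed heat appear, and ln tau_S(t) = - beta H_S(t) - ln Z_S(t)
    turns D[rhotil || tau_S(t)] into energy and free-energy terms.  In
    eigenbases, Klein's inequality is x ln y <= x ln x + y - x averaged over
    the doubly stochastic weights |<i|j>|^2 of the unitary relating the two
    eigenbases. *)

Section RealEmbedding.
Variable R : realType.
Local Notation C := (complex R).

Lemma rCD (x y : R) : rC (x + y) = rC x + rC y.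
Proof. exact: (rmorphD (real_complex R)). Qed.

Lemma rCN (x : R) : rC (- x) = - rC x.
Proof. exact: (rmorphN (real_complex R)). Qed.

Lemma rCM (x y : R) : rC (x * y) = rC x * rC y.
Proof. exact: (rmorphM (real_complex R)). Qed.

Lemma rC_sum (I : Type) (r : seq I) (P : pred I) (F : I -> R) :
  rC (\sum_(i <- r | P i) F i) = \sum_(i <- r | P i) rC (F i).
Proof. exact: (rmorph_sum (real_complex R)). Qed.

Lemma Re_rC (x : R) : complex.Re (rC x) = x.
Proof. by []. Qed.

Lemma rC_inj : injective (@rC R).
Proof. by move=> x y []. Qed.

Lemma conj_rC (x : R) : (rC x)^* = rC x.
Proof. by apply/eqP; rewrite eq_complex /= oppr0 !eqxx. Qed.

Lemma Re_rCM (x : R) (z : C) : complex.Re (rC x * z) = x * complex.Re z.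
Proof. by case: z => a b /=; rewrite mul0r subr0. Qed.

Definition abs2 (z : C) : R := complex.Re (z * z^*).

Lemma rC_abs2 (z : C) : rC (abs2 z) = z * z^*.
Proof. by case: z => a b; apply/eqP; rewrite eq_complex /= eqxx /=; apply/eqP; ring. Qed.

Lemma abs2_ge0 (z : C) : 0 <= abs2 z.
Proof. by case: z => a b; rewrite /abs2 /= mulrN opprK addr_ge0 ?sqr_ge0. Qed.

End RealEmbedding.

Section DiagonalMatrices.
Variable R : realType.
Local Notation C := (complex R).

Lemma trmxC_mul_unitary n (P : 'M[C]_n) : P \is unitarymx -> P^t* *m P = 1%:M.
Proof. by move=> Pu; rewrite -[P^t*]mul1mx mulmxKtV. Qed.

Lemma trmxC_mul m n p (A : 'M[C]_(m, n)) (B : 'M[C]_(n, p)) :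
  (A *m B)^t* = B^t* *m A^t*.
Proof. by rewrite trmx_mul map_mxM. Qed.

Definition dgm n (f : 'I_n -> R) : 'M[C]_n := diag_mx (\row_i rC (f i)).

Lemma diag_map_rC n (g : R -> R) (d : 'rV[R]_n) :
  diag_mx (map_mx (fun x => rC (g x)) d) = dgm (fun i => g (d 0 i)).
Proof. by apply/matrixP => i j; rewrite !mxE. Qed.

Lemma dgmE n (f : 'I_n -> R) i j : dgm f i j = rC (f i) *+ (i == j).
Proof. by rewrite !mxE. Qed.

Lemma eq_dgm n (f g : 'I_n -> R) : f =1 g -> dgm f = dgm g.
Proof. by move=> fg; apply/matrixP => i j; rewrite !dgmE fg. Qed.

Lemma dgm1 n : dgm (fun _ : 'I_n => 1) = 1%:M.
Proof. by apply/matrixP => i j; rewrite !mxE. Qed.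

Lemma dgmD n (f g : 'I_n -> R) : dgm f + dgm g = dgm (fun i => f i + g i).
Proof. by apply/matrixP => i j; rewrite !mxE rCD mulrnDl. Qed.

Lemma dgmB n (f g : 'I_n -> R) : dgm f - dgm g = dgm (fun i => f i - g i).
Proof. by apply/matrixP => i j; rewrite !mxE rCD rCN mulrnBl. Qed.

Lemma dgmZ n (a : R) (f : 'I_n -> R) : rC a *: dgm f = dgm (fun i => a * f i).
Proof. by apply/matrixP => i j; rewrite !mxE rCM mulrnAr. Qed.

Lemma dgm_mul n (f g : 'I_n -> R) : dgm f *m dgm g = dgm (fun i => f i * g i).
Proof. by rewrite /dgm mulmx_diag; apply/matrixP => i j; rewrite !mxE rCM. Qed.

Lemma trmxC_dgm n (f : 'I_n -> R) : (dgm f)^t* = dgm f.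
Proof.
apply/matrixP => i j; rewrite !mxE eq_sym.
by have [->|_] := eqVneq j i; rewrite ?mulr1n ?mulr0n ?conj_rC ?rmorph0.
Qed.

Lemma trmxC_conj_dgm n (P : 'M[C]_n) (f : 'I_n -> R) :
  (P^t* *m dgm f *m P)^t* = P^t* *m dgm f *m P.
Proof. by rewrite !trmxC_mul trmxCK trmxC_dgm mulmxA. Qed.

Lemma rtr_dgm n (f : 'I_n -> R) : rtr (dgm f) = \sum_i f i.
Proof. by rewrite /rtr mxtrace_diag raddf_sum; apply: eq_bigr => i _; rewrite mxE. Qed.

Lemma rtrD n (A B : 'M[C]_n) : rtr (A + B) = rtr A + rtr B.
Proof. by rewrite /rtr mxtraceD raddfD. Qed.

Lemma rtrB n (A B : 'M[C]_n) : rtr (A - B) = rtr A - rtr B.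
Proof. by rewrite /rtr !raddfB. Qed.

Lemma rtrZ n (a : R) (A : 'M[C]_n) : rtr (rC a *: A) = a * rtr A.
Proof. by rewrite /rtr mxtraceZ Re_rCM. Qed.

Lemma rtr_sum n (I : Type) (r : seq I) (P : pred I) (F : I -> 'M[C]_n) :
  rtr (\sum_(i <- r | P i) F i) = \sum_(i <- r | P i) rtr (F i).
Proof. by rewrite /rtr (raddf_sum (@mxtrace _ n)) raddf_sum. Qed.

Lemma rtr_mulC n (A B : 'M[C]_n) : rtr (A *m B) = rtr (B *m A).
Proof. by rewrite /rtr mxtrace_mulC. Qed.

Lemma rtr_unitary_conj n (P A : 'M[C]_n) : P \is unitarymx ->
  rtr (P^t* *m A *m P) = rtr A.
Proof. by move=> Pu; rewrite rtr_mulC mulmxA (unitarymxP Pu) mul1mx. Qed.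

Lemma rtr_dgm_mul n (f : 'I_n -> R) (A : 'M[C]_n) :
  rtr (dgm f *m A) = \sum_i f i * complex.Re (A i i).
Proof.
rewrite /rtr mul_diag_mx /mxtrace raddf_sum.
by apply: eq_bigr => i _; rewrite !mxE; apply: Re_rCM.
Qed.

Lemma conj_dgm_diag n (X : 'M[C]_n) (f : 'I_n -> R) i :
  (X *m dgm f *m X^t*) i i = rC (\sum_j abs2 (X i j) * f j).
Proof.
rewrite mul_mx_diag !mxE rC_sum; apply: eq_bigr => j _.
by rewrite !mxE rCM rC_abs2; ring.
Qed.

Lemma unitary_abs2_row n (X : 'M[C]_n) i : X \is unitarymx ->
  \sum_j abs2 (X i j) = 1.
Proof.
move=> /unitarymxP /matrixP /(_ i i); rewrite !mxE eqxx => XX.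
by apply: rC_inj; rewrite rC_sum -[rC 1]XX; apply: eq_bigr => j _; rewrite rC_abs2 !mxE.
Qed.

Lemma unitary_abs2_col n (X : 'M[C]_n) j : X \is unitarymx ->
  \sum_i abs2 (X i j) = 1.
Proof.
move=> /trmxC_mul_unitary /matrixP /(_ j j); rewrite !mxE eqxx => XX.
apply: rC_inj; rewrite rC_sum -[rC 1]XX; apply: eq_bigr => i _.
by rewrite rC_abs2 !mxE mulrC.
Qed.

Lemma conj_dgm_mul n (P : 'M[C]_n) (f g : 'I_n -> R) : P \is unitarymx ->
  P^t* *m dgm f *m P *m (P^t* *m dgm g *m P) = P^t* *m dgm (fun i => f i * g i) *m P.
Proof.
move=> Pu; rewrite !mulmxA -(mulmxA _ P (P^t*)) (unitarymxP Pu) mulmx1.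
by rewrite -(mulmxA (P^t*)) dgm_mul.
Qed.

Lemma conj_dgm1 n (P : 'M[C]_n) : P \is unitarymx -> P^t* *m dgm (fun=> 1) *m P = 1%:M.
Proof. by move=> Pu; rewrite dgm1 mulmx1 trmxC_mul_unitary. Qed.

End DiagonalMatrices.

Section FunctionalCalculus.
Variable R : realType.
Local Notation C := (complex R).

Lemma dgm_intertwine n (f : R -> R) (d e : 'I_n -> R) (X : 'M[C]_n) :
  dgm e *m X = X *m dgm d -> dgm (fun i => f (e i)) *m X = X *m dgm (fun i => f (d i)).
Proof.
move=> /matrixP eX; apply/matrixP => i j; move: (eX i j).
rewrite /dgm !mul_diag_mx !mul_mx_diag !mxE /= => eXij.
have [-> | Xij] := eqVneq (X i j) 0; first by rewrite mulr0 mul0r.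
have -> : e i = d j by apply: rC_inj; apply: (mulIf Xij); rewrite eXij mulrC.
by rewrite mulrC.
Qed.

Lemma mfun_conj_dgm n (f : R -> R) (P : 'M[C]_n) (d : 'I_n -> R) :
  P \is unitarymx -> mfun f (P^t* *m dgm d *m P) = P^t* *m dgm (fun i => f (d i)) *m P.
Proof.
move=> Pu; rewrite /mfun; case: pselect => [ex | []]; last first.
  exists (P, \row_i d i); split; first exact: Pu.
  rewrite [(_, _).1]/= [(_, _).2]/= diag_map_rC.
  by apply: (congr1 (fun D => P^t* *m D *m P)); apply: eq_dgm => i; rewrite mxE.
case: (cid ex) => -[Q e] [Qu]; rewrite [(_, _).1]/= [(_, _).2]/= !diag_map_rC => eQP.
(* [mfun] used some other decomposition Q^* diag(e) Q; X intertwines the two. *)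
pose X := Q *m P^t*.
have eX : dgm (fun i => e 0 i) *m X = X *m dgm d.
  transitivity (Q *m (Q^t* *m dgm (fun i => e 0 i) *m Q) *m P^t*).
    by rewrite /X !mulmxA (unitarymxP Qu) mul1mx.
  by rewrite -eQP /X !mulmxA -(mulmxA _ P) (unitarymxP Pu) mulmx1.
transitivity (Q^t* *m dgm (fun i => f (e 0 i)) *m (X *m P)).
  by rewrite /X -(mulmxA Q) (trmxC_mul_unitary Pu) mulmx1.
rewrite mulmxA -(mulmxA _ _ X) (dgm_intertwine f eX) mulmxA /X mulmxA.
by rewrite trmxC_mul_unitary ?mul1mx.
Qed.

Lemma selfadj_spectral n (A : 'M[C]_n) : selfadjmx A ->
  exists (P : 'M[C]_n) (d : 'I_n -> R), P \is unitarymx /\ A = P^t* *m dgm d *m P.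
Proof.
move=> /eqP hA.
have Aherm : A \is hermsymmx by apply/is_hermitianmxP; rewrite expr0 scale1r hA.
have /orthomx_spectralP eA := hermitian_normalmx Aherm.
have /mxOverP Areal := hermitian_spectral_diag_real Aherm.
have sdE i : rC (complex.Re (spectral_diag A 0 i)) = spectral_diag A 0 i.
  have := Areal 0 i; rewrite CrealE; case: (spectral_diag A 0 i) => a b /eqP [] /eqP.
  by rewrite eq_sym -addr_eq0 -mulr2n mulrn_eq0 /= => /eqP ->.
exists (spectralmx A), (fun i => complex.Re (spectral_diag A 0 i)).
split; first exact: spectral_unitarymx.
have -> : dgm (fun i => complex.Re (spectral_diag A 0 i)) = diag_mx (spectral_diag A).
  by apply/matrixP => i j; rewrite dgmE sdE !mxE.
by rewrite -invmx_unitary ?spectral_unitarymx.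
Qed.

Lemma eigencols_spectral n (A V : 'M[C]_n) (e : 'I_n -> R) : V \is unitarymx ->
  (forall k, A *m col k V = rC (e k) *: col k V) -> A = V^t*^t* *m dgm e *m V^t*.
Proof.
move=> Vu eV; rewrite trmxCK.
have AV : A *m V = V *m dgm e.
  apply/matrixP => i k; have /matrixP /(_ i 0) := eV k.
  rewrite /dgm mul_mx_diag !mxE mulrC => <-.
  by apply: eq_bigr => l _; rewrite !mxE.
by rewrite -AV -mulmxA (unitarymxP Vu) mulmx1.
Qed.

Lemma sum_ketbra_col n (V : 'M[C]_n) (w : 'I_n -> R) :
  \sum_k rC (w k) *: ketbra (col k V) = V^t*^t* *m dgm w *m V^t*.
Proof.
rewrite trmxCK; apply/matrixP => i j; rewrite /dgm mul_mx_diag summxE !mxE.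
apply: eq_bigr => k _; rewrite !mxE big_ord1 !mxE.
by rewrite mulrA [rC (w k) * _]mulrC.
Qed.

End FunctionalCalculus.

Section GibbsStates.
Variable R : realType.
Local Notation C := (complex R).

Definition boltzmann n (beta : R) (d : 'I_n -> R) (i : 'I_n) : R :=
  expR (- beta * d i) / \sum_j expR (- beta * d j).

Lemma sum_expR_gt0 n (g : 'I_n -> R) (i : 'I_n) : 0 < \sum_j expR (g j).
Proof.
rewrite (bigD1 i) //= ltr_wpDr ?expR_gt0 //.
by apply: sumr_ge0 => j _; exact/ltW/expR_gt0.
Qed.

Lemma boltzmann_gt0 n beta (d : 'I_n -> R) i : 0 < boltzmann beta d i.
Proof. by rewrite divr_gt0 ?expR_gt0 // (sum_expR_gt0 _ i). Qed.

Lemma sum_boltzmann n beta (d : 'I_n -> R) : (0 < n)%N ->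
  \sum_i boltzmann beta d i = 1.
Proof.
case: n d => // n d _; rewrite -mulr_suml divff //.
by rewrite gt_eqF // (sum_expR_gt0 _ ord0).
Qed.

Lemma ln_boltzmann n beta (d : 'I_n -> R) i :
  ln (boltzmann beta d i) = - beta * d i - ln (\sum_j expR (- beta * d j)).
Proof. by rewrite ln_div ?expRK // posrE ?expR_gt0 // (sum_expR_gt0 _ i). Qed.

Lemma sum_mul_ln_boltzmann n beta (d x : 'I_n -> R) : \sum_i x i = 1 ->
  \sum_i x i * ln (boltzmann beta d i) =
  - beta * (\sum_i x i * d i) - ln (\sum_j expR (- beta * d j)).
Proof.
move=> x1; under eq_bigr => i _ do rewrite ln_boltzmann mulrBr.
by rewrite sumrB -mulr_suml x1 mul1r mulr_sumr; congr (_ - _); apply: eq_bigr => i _; ring.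
Qed.

Lemma partfun_conj_dgm n beta (P : 'M[C]_n) (d : 'I_n -> R) : P \is unitarymx ->
  partfun beta (P^t* *m dgm d *m P) = \sum_i expR (- beta * d i).
Proof.
by move=> Pu; rewrite /partfun /expmx mfun_conj_dgm // rtr_unitary_conj // rtr_dgm.
Qed.

Lemma gibbs_conj_dgm n beta (P : 'M[C]_n) (d : 'I_n -> R) : P \is unitarymx ->
  gibbs beta (P^t* *m dgm d *m P) = P^t* *m dgm (boltzmann beta d) *m P.
Proof.
move=> Pu; rewrite /gibbs partfun_conj_dgm // /expmx mfun_conj_dgm //.
rewrite scalemxAl scalemxAr dgmZ; apply: (congr1 (fun D => P^t* *m D *m P)).
by apply: eq_dgm => i; rewrite /boltzmann /= mulrC.
Qed.

Lemma mfun_ln_gibbs n (beta : R) (H : 'M[C]_n) : selfadjmx H ->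
  mfun (@ln R) (gibbs beta H) = rC (- beta) *: H - rC (ln (partfun beta H)) *: 1%:M.
Proof.
move=> /selfadj_spectral [P [d [Pu ->]]].
rewrite gibbs_conj_dgm // mfun_conj_dgm // partfun_conj_dgm // -(conj_dgm1 Pu).
rewrite [rC (- beta) *: _]scalemxAl [rC (ln _) *: _]scalemxAl !scalemxAr !dgmZ.
rewrite -mulmxBl -mulmxBr dgmB.
apply: (congr1 (fun D => P^t* *m D *m P)).
by apply: eq_dgm => i /=; rewrite ln_boltzmann mulr1.
Qed.

Lemma rtr_mul_ln_gibbs n (beta : R) (A H : 'M[C]_n) : selfadjmx H ->
  rtr (A *m mfun (@ln R) (gibbs beta H)) =
  - beta * rtr (A *m H) - ln (partfun beta H) * rtr A.
Proof. by move=> Hsa; rewrite mfun_ln_gibbs // mulmxBr -!scalemxAr mulmx1 rtrB !rtrZ. Qed.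

End GibbsStates.

Section TensorProducts.
Variable R : realType.
Local Notation C := (complex R).

Lemma sum_tens (V : nmodType) n m (F : 'I_(n * m) -> V) :
  \sum_c F c = \sum_i \sum_j F (mxtens_index (i, j)).
Proof.
rewrite pair_big /=; apply: reindex => /=; exists (@mxtens_unindex n m) => c _.
  by rewrite -surjective_pairing mxtens_indexK.
by rewrite mxtens_unindexK.
Qed.

Definition tensf n m (f : 'I_n -> R) (g : 'I_m -> R) (c : 'I_(n * m)) : R :=
  f (mxtens_unindex c).1 * g (mxtens_unindex c).2.

Lemma tensfE n m (f : 'I_n -> R) (g : 'I_m -> R) i j :
  tensf f g (mxtens_index (i, j)) = f i * g j.
Proof. by rewrite /tensf mxtens_indexK. Qed.

Lemma tensf_gt0 n m (f : 'I_n -> R) (g : 'I_m -> R) :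
  (forall i, 0 < f i) -> (forall j, 0 < g j) -> forall c, 0 < tensf f g c.
Proof. by move=> f0 g0 c; rewrite mulr_gt0. Qed.

Lemma sum_tensf n m (f : 'I_n -> R) (g : 'I_m -> R) :
  \sum_c tensf f g c = (\sum_i f i) * (\sum_j g j).
Proof.
rewrite sum_tens mulr_suml; apply: eq_bigr => i _.
by rewrite mulr_sumr; apply: eq_bigr => j _; rewrite tensfE.
Qed.

Lemma tensmx_dgm n m (f : 'I_n -> R) (g : 'I_m -> R) :
  dgm f *t dgm g = dgm (tensf f g).
Proof.
apply/matrixP => c c'; case: (mxtens_indexP c) => i j; case: (mxtens_indexP c') => k l.
rewrite tensmxE !dgmE tensfE (can_eq (@mxtens_indexK _ _)) xpair_eqE rCM.
by case: (i == k); case: (j == l); rewrite ?mulr1n ?mulr0n ?mulr0 ?mul0r.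
Qed.

Lemma tensmx11 n m : (1%:M : 'M[C]_n) *t (1%:M : 'M[C]_m) = 1%:M.
Proof. by rewrite -!dgm1 tensmx_dgm; apply: eq_dgm => c; rewrite /tensf mulr1. Qed.

Lemma trmxC_tens m n p q (A : 'M[C]_(m, n)) (B : 'M[C]_(p, q)) :
  (A *t B)^t* = A^t* *t B^t*.
Proof. by rewrite trmx_tens map_mxT. Qed.

Lemma unitary_tens n m (A : 'M[C]_n) (B : 'M[C]_m) :
  A \is unitarymx -> B \is unitarymx -> A *t B \is unitarymx.
Proof.
move=> /unitarymxP AA /unitarymxP BB; apply/unitarymxP.
by rewrite trmxC_tens tensmx_mul AA BB tensmx11.
Qed.

Lemma tens_conj_dgm n m (P : 'M[C]_n) (Q : 'M[C]_m) (f : 'I_n -> R) (g : 'I_m -> R) :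
  (P^t* *m dgm f *m P) *t (Q^t* *m dgm g *m Q) =
  (P *t Q)^t* *m dgm (tensf f g) *m (P *t Q).
Proof. by rewrite trmxC_tens -tensmx_dgm !tensmx_mul. Qed.

Lemma tensmxBr m n p q (A : 'M[C]_(m, n)) (B D : 'M[C]_(p, q)) :
  A *t (B - D) = A *t B - A *t D.
Proof. by apply/matrixP => i j; rewrite !mxE mulrBr. Qed.

Lemma tensmxZr m n p q (a : C) (A : 'M[C]_(m, n)) (B : 'M[C]_(p, q)) :
  A *t (a *: B) = a *: (A *t B).
Proof. by apply/matrixP => i j; rewrite !mxE mulrCA. Qed.

Lemma conj_tensmx_suml n m p (I : Type) (r : seq I) (P : pred I) (c : I -> C)
    (X : I -> 'M[C]_n) (T : 'M[C]_m) (A : 'M[C]_(p, n * m)) (B : 'M[C]_(n * m, p)) :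
  A *m ((\sum_(k <- r | P k) c k *: X k) *t T) *m B =
  \sum_(k <- r | P k) c k *: (A *m (X k *t T) *m B).
Proof.
have -> : (\sum_(k <- r | P k) c k *: X k) *t T = \sum_(k <- r | P k) c k *: (X k *t T).
  apply/matrixP => i j; rewrite !mxE !summxE mulr_suml.
  by apply: eq_bigr => k _; rewrite !mxE mulrA.
rewrite mulmx_sumr mulmx_suml; apply: eq_bigr => k _.
by rewrite -scalemxAr -scalemxAl.
Qed.

Lemma ptraceB_sum n m (I : Type) (r : seq I) (P : pred I) (c : I -> C)
    (X : I -> 'M[C]_(n * m)) :
  ptraceB (\sum_(k <- r | P k) c k *: X k) = \sum_(k <- r | P k) c k *: ptraceB (X k).
Proof.
apply/matrixP => i j; rewrite !mxE !summxE.
under eq_bigr => k _ do rewrite summxE.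
rewrite exchange_big /=; apply: eq_bigr => k _; rewrite !mxE mulr_sumr.
by apply: eq_bigr => l _; rewrite !mxE.
Qed.

Lemma channel_sum n m k (U : 'M[C]_(n * m)) (T : 'M[C]_m) (c : 'I_k -> C)
    (X : 'I_k -> 'M[C]_n) :
  channel U T (\sum_i c i *: X i) = \sum_i c i *: channel U T (X i).
Proof. by rewrite /channel conj_tensmx_suml ptraceB_sum. Qed.

Lemma ptraceB_adj n m (Z : 'M[C]_(n * m)) : ptraceB (Z^t*) = (ptraceB Z)^t*.
Proof. by apply/matrixP => i j; rewrite !mxE rmorph_sum; apply: eq_bigr => k _; rewrite !mxE. Qed.

Lemma mxtrace_ptraceB n m (Z : 'M[C]_(n * m)) : \tr (ptraceB Z) = \tr Z.
Proof. by rewrite /mxtrace sum_tens; apply: eq_bigr => i _; rewrite mxE. Qed.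

Lemma ptraceB_tens1_mull n m (A : 'M[C]_n) (Z : 'M[C]_(n * m)) :
  ptraceB ((A *t 1%:M) *m Z) = A *m ptraceB Z.
Proof.
apply/matrixP => i j; rewrite !mxE.
under [RHS]eq_bigr => i' _ do rewrite mxE mulr_sumr.
rewrite exchange_big; apply: eq_bigr => k _; rewrite mxE sum_tens.
apply: eq_bigr => i' _; rewrite (bigD1 k) //= big1 ?addr0.
  by rewrite tensmxE !mxE eqxx mulr1.
by move=> l /negbTE lk; rewrite tensmxE !mxE eq_sym lk mulr0 mul0r.
Qed.

Lemma ptraceB_tens1_mulr n m (A : 'M[C]_n) (Z : 'M[C]_(n * m)) :
  ptraceB (Z *m (A *t 1%:M)) = ptraceB Z *m A.
Proof.
apply/matrixP => i j; rewrite !mxE.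
under [RHS]eq_bigr => j' _ do rewrite mxE mulr_suml.
rewrite exchange_big; apply: eq_bigr => k _; rewrite mxE sum_tens.
apply: eq_bigr => j' _; rewrite (bigD1 k) //= big1 ?addr0.
  by rewrite tensmxE !mxE eqxx mulr1.
by move=> l /negbTE lk; rewrite tensmxE !mxE lk mulr0 mulr0.
Qed.

Lemma rtr_ptraceB n m (Z : 'M[C]_(n * m)) : rtr (ptraceB Z) = rtr Z.
Proof. by rewrite /rtr mxtrace_ptraceB. Qed.

Lemma rtr_mul_tens1 n m (Z : 'M[C]_(n * m)) (A : 'M[C]_n) :
  rtr (Z *m (A *t 1%:M)) = rtr (ptraceB Z *m A).
Proof. by rewrite -ptraceB_tens1_mulr rtr_ptraceB. Qed.

End TensorProducts.

Section ScalarEntropy.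
Variable R : realType.

Lemma mul_ln_le (x y : R) : 0 < x -> 0 < y -> x * ln y <= x * ln x + y - x.
Proof.
move=> x0 y0.
have ln_le : ln y - ln x <= y / x - 1.
  have yx1 : -1 < y / x - 1 by have := divr_gt0 y0 x0; lra.
  rewrite -ln_div ?posrE // -[y / x](addrNK 1) addrC.
  by apply: le_trans (le_ln1Dx yx1) _; lra.
have := ler_wpM2l (ltW x0) ln_le.
by rewrite mulrBr mulrBr mulr1 mulrCA divff ?gt_eqF // mulr1; lra.
Qed.

Lemma gibbs_ineq (I : finType) (p q : I -> R) :
  (forall i, 0 < p i) -> (forall i, 0 < q i) -> \sum_i p i = 1 -> \sum_i q i = 1 ->
  \sum_i p i * ln (q i) <= \sum_i p i * ln (p i).
Proof.
move=> p0 q0 p1 q1.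
have : \sum_i p i * ln (q i) <= \sum_i (p i * ln (p i) + q i - p i).
  by apply: ler_sum => i _; exact: mul_ln_le.
by rewrite sumrB big_split /= p1 q1 addrK.
Qed.

Lemma doubly_stochastic_ln_le (I J : finType) (M : I -> J -> R) (a : I -> R) (b : J -> R) :
  (forall i j, 0 <= M i j) -> (forall i, \sum_j M i j = 1) -> (forall j, \sum_i M i j = 1) ->
  (forall i, 0 < a i) -> (forall j, 0 < b j) -> \sum_i a i = 1 -> \sum_j b j = 1 ->
  \sum_i a i * (\sum_j M i j * ln (b j)) <= \sum_i a i * ln (a i).
Proof.
move=> M0 Mrow Mcol a0 b0 a1 b1.
have -> : \sum_i a i * (\sum_j M i j * ln (b j)) = \sum_i \sum_j M i j * (a i * ln (b j)).
  by apply: eq_bigr => i _; rewrite mulr_sumr; apply: eq_bigr => j _; ring.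
apply: (@le_trans _ _ (\sum_i \sum_j M i j * (a i * ln (a i) + b j - a i))).
  by apply: ler_sum => i _; apply: ler_sum => j _; rewrite ler_wpM2l ?mul_ln_le.
have row_sum i : \sum_j M i j * (a i * ln (a i) + b j - a i) =
    a i * ln (a i) - a i + \sum_j M i j * b j.
  rewrite (eq_bigr (fun j => (a i * ln (a i) - a i) * M i j + M i j * b j)).
    by rewrite big_split /= -mulr_sumr Mrow mulr1.
  by move=> j _; ring.
rewrite (eq_bigr _ (fun i _ => row_sum i)) big_split sumrB /= exchange_big /=.
under [X in _ + X]eq_bigr => j _ do rewrite -mulr_suml Mcol mul1r.
by rewrite a1 b1 subrK.
Qed.

Lemma sum_mul_gt0 (I : finType) (w x : I -> R) :
  (forall i, 0 <= w i) -> \sum_i w i = 1 -> (forall i, 0 < x i) ->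
  0 < \sum_i w i * x i.
Proof.
move=> w0 w1 x0; have wx0 i : 0 <= w i * x i by exact: mulr_ge0 (w0 i) (ltW (x0 i)).
rewrite lt_def sumr_ge0 // andbT; apply/negP; rewrite psumr_eq0 // => /allP wx_eq0.
move/eqP: (oner_neq0 R); apply; rewrite -w1; apply: big1 => i _.
have /implyP /(_ isT) := wx_eq0 i (mem_index_enum i).
by rewrite mulf_eq0 (gt_eqF (x0 i)) orbF => /eqP.
Qed.

Lemma entropy_tensf n m (f : 'I_n -> R) (g : 'I_m -> R) :
  (forall i, 0 < f i) -> (forall j, 0 < g j) -> \sum_i f i = 1 -> \sum_j g j = 1 ->
  \sum_c tensf f g c * ln (tensf f g c) =
  \sum_i f i * ln (f i) + \sum_j g j * ln (g j).
Proof.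
move=> f0 g0 f1 g1; rewrite sum_tens.
transitivity (\sum_i \sum_j (f i * ln (f i) * g j + f i * (g j * ln (g j)))).
  apply: eq_bigr => i _; apply: eq_bigr => j _.
  by rewrite tensfE lnM ?posrE //; ring.
under eq_bigr => i _ do rewrite big_split /= -!mulr_sumr g1 mulr1.
by rewrite big_split /= -mulr_suml f1 mul1r.
Qed.

End ScalarEntropy.

Section KleinInequality.
Variable R : realType.
Local Notation C := (complex R).

Lemma rtr_mul_mfun_conj_dgm n (f : R -> R) (P : 'M[C]_n) (a : 'I_n -> R) :
  P \is unitarymx ->
  rtr (P^t* *m dgm a *m P *m mfun f (P^t* *m dgm a *m P)) = \sum_i a i * f (a i).
Proof. by move=> Pu; rewrite mfun_conj_dgm // conj_dgm_mul // rtr_unitary_conj // rtr_dgm. Qed.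

Lemma rtr_mul_conj_dgm n (P Q : 'M[C]_n) (a g : 'I_n -> R) :
  rtr (P^t* *m dgm a *m P *m (Q^t* *m dgm g *m Q)) =
  \sum_i a i * \sum_j abs2 ((P *m Q^t*) i j) * g j.
Proof.
have -> : rtr (P^t* *m dgm a *m P *m (Q^t* *m dgm g *m Q)) =
    rtr (dgm a *m ((P *m Q^t*) *m dgm g *m (P *m Q^t*)^t*)).
  by rewrite trmxC_mul trmxCK -!mulmxA [LHS]rtr_mulC -!mulmxA.
rewrite rtr_dgm_mul; apply: eq_bigr => i _.
by rewrite conj_dgm_diag Re_rC.
Qed.

(* Strict positivity is needed: [mfun ln] uses the junk value [ln 0 = 0]. *)
Lemma klein_ineq n (rho sigma P Q : 'M[C]_n) (a b : 'I_n -> R) :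
  P \is unitarymx -> Q \is unitarymx ->
  rho = P^t* *m dgm a *m P -> sigma = Q^t* *m dgm b *m Q ->
  (forall i, 0 < a i) -> (forall j, 0 < b j) -> \sum_i a i = 1 -> \sum_j b j = 1 ->
  0 <= relent rho sigma.
Proof.
move=> Pu Qu -> -> a0 b0 a1 b1.
have Qtu : Q^t* \is unitarymx by rewrite trmxC_unitary.
have Xu := mul_unitarymx Pu Qtu.
rewrite /relent subr_ge0 rtr_mul_mfun_conj_dgm // mfun_conj_dgm // rtr_mul_conj_dgm.
apply: (doubly_stochastic_ln_le (M := fun i j => abs2 ((P *m Q^t*) i j))) => //.
- by move=> i j; exact: abs2_ge0.
- by move=> i; exact: unitary_abs2_row.
- by move=> j; exact: unitary_abs2_col.
Qed.

Lemma mfun_ln_tens n m (A P : 'M[C]_n) (B Q : 'M[C]_m) (a : 'I_n -> R) (b : 'I_m -> R) :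
  P \is unitarymx -> Q \is unitarymx ->
  A = P^t* *m dgm a *m P -> B = Q^t* *m dgm b *m Q ->
  (forall i, 0 < a i) -> (forall j, 0 < b j) ->
  mfun (@ln R) (A *t B) = mfun (@ln R) A *t 1%:M + 1%:M *t mfun (@ln R) B.
Proof.
move=> Pu Qu -> -> a0 b0; have PQu := unitary_tens Pu Qu.
rewrite tens_conj_dgm !mfun_conj_dgm //.
rewrite -[X in _ *t X + _](conj_dgm1 Qu) -[X in _ + X *t _](conj_dgm1 Pu).
rewrite !tens_conj_dgm -mulmxDl -mulmxDr dgmD.
apply: (congr1 (fun D => (P *t Q)^t* *m D *m (P *t Q))); apply: eq_dgm => c.
by rewrite /tensf lnM ?posrE // mulr1 mul1r.
Qed.

Lemma ptraceB_spectrum_gt0 n m (P : 'M[C]_(n * m)) (lam : 'I_(n * m) -> R)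
    (Y : 'M[C]_n) (r : 'I_n -> R) :
  (0 < m)%N -> P \is unitarymx -> (forall c, 0 < lam c) -> Y \is unitarymx ->
  ptraceB (P^t* *m dgm lam *m P) = Y^t* *m dgm r *m Y -> forall i, 0 < r i.
Proof.
move=> m_gt0 Pu lam0 Yu erho i.
have Ptu : P^t* \is unitarymx by rewrite trmxC_unitary.
have Y1u : Y *t (1%:M : 'M[C]_m) \is unitarymx.
  by apply: unitary_tens => //; apply/unitarymxP; rewrite trmx1 map_mx1 mulmx1.
set X := (Y *t 1%:M) *m P^t*; have Xu : X \is unitarymx := mul_unitarymx Y1u Ptu.
have : dgm r = ptraceB (X *m dgm lam *m X^t*).
  rewrite /X trmxC_mul trmxCK trmxC_tens trmx1 map_mx1 !mulmxA ptraceB_tens1_mulr.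
  rewrite -!mulmxA ptraceB_tens1_mull !mulmxA erho !mulmxA (unitarymxP Yu) mul1mx.
  by rewrite -mulmxA (unitarymxP Yu) mulmx1.
have row_gt0 c : 0 < \sum_a abs2 (X c a) * lam a.
  exact: sum_mul_gt0 (fun a => abs2_ge0 _) (unitary_abs2_row c Xu) lam0.
move/matrixP/(_ i i); rewrite dgmE eqxx mulr1n mxE.
under eq_bigr => l _ do rewrite conj_dgm_diag.
rewrite -rC_sum => /rC_inj ->.
rewrite (bigD1 (Ordinal m_gt0)) //= ltr_wpDr ?row_gt0 //.
by apply: sumr_ge0 => l _; exact/ltW/row_gt0.
Qed.

End KleinInequality.

Section GuessedWork.
Variables (R : realType) (n m : nat) (beta : R).
Local Notation C := (complex R).
Variables (H0 Ht : 'M[C]_n) (HB Bm : 'M[C]_m) (b : 'I_m -> R).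
Variables (U : 'M[C]_(n * m)) (V : 'M[C]_n) (eps : 'I_n -> R).
Hypotheses (n_gt0 : (0 < n)%N) (m_gt0 : (0 < m)%N) (beta_gt0 : 0 < beta).
Hypothesis Ht_selfadj : selfadjmx Ht.
Hypotheses (Uu : U \is unitarymx) (Vu : V \is unitarymx) (Bu : Bm \is unitarymx).
Hypothesis H0_eigen : forall k, H0 *m col k V = rC (eps k) *: col k V.
Hypothesis HB_spectral : HB = Bm^t* *m dgm b *m Bm.

Let tauB := gibbs beta HB.
Let Phi := channel U tauB.
Let proj (k : 'I_n) := ketbra (col k V).
Let Et (k : 'I_n) := rtr (Ht *m Phi (proj k)).
Let q := boltzmann beta Et.
Let Theta := \sum_(k < n) rC (q k) *: (U *m (proj k *t tauB) *m U^t*).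
Let rhotil := ptraceB Theta.
Let p := boltzmann beta eps.
Let pB := boltzmann beta b.
Let lam := tensf q pB.
Let G := (V^t* *t Bm) *m U^t*.

Let Vt_unitary : V^t* \is unitarymx.
Proof. by rewrite trmxC_unitary. Qed.

Let HB_selfadj : selfadjmx HB.
Proof. by apply/eqP; rewrite HB_spectral trmxC_conj_dgm. Qed.

Lemma tauB_spectral : tauB = Bm^t* *m dgm pB *m Bm.
Proof. by rewrite /tauB HB_spectral gibbs_conj_dgm. Qed.

Lemma tau0_spectral : gibbs beta H0 = V^t*^t* *m dgm p *m V^t*.
Proof. by rewrite {1}(eigencols_spectral Vu H0_eigen) (gibbs_conj_dgm _ _ Vt_unitary). Qed.

Lemma G_unitary : G \is unitarymx.
Proof.
have Utu : U^t* \is unitarymx by rewrite trmxC_unitary.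
exact: mul_unitarymx (unitary_tens Vt_unitary Bu) Utu.
Qed.

Lemma lam_gt0 c : 0 < lam c.
Proof. by apply: tensf_gt0 => i; exact: boltzmann_gt0. Qed.

Lemma sum_lam : \sum_c lam c = 1.
Proof. by rewrite sum_tensf !sum_boltzmann // mulr1. Qed.

Lemma Theta_spectral : Theta = G^t* *m dgm lam *m G.
Proof.
rewrite /Theta /proj -conj_tensmx_suml sum_ketbra_col tauB_spectral tens_conj_dgm.
by rewrite /G trmxC_mul trmxCK !mulmxA.
Qed.

Lemma rtr_Theta : rtr Theta = 1.
Proof. by rewrite Theta_spectral (rtr_unitary_conj _ G_unitary) rtr_dgm sum_lam. Qed.

Lemma rhotil_spectral : exists (Y : 'M[C]_n) (r : 'I_n -> R),
  [/\ Y \is unitarymx, rhotil = Y^t* *m dgm r *m Y, forall i, 0 < r i & \sum_i r i = 1].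
Proof.
have rhotil_selfadj : selfadjmx rhotil.
  by apply/eqP; rewrite /rhotil -ptraceB_adj Theta_spectral trmxC_conj_dgm.
have [Y [r [Yu rhotilE]]] := selfadj_spectral rhotil_selfadj.
exists Y, r; split => //.
  move: rhotilE; rewrite /rhotil Theta_spectral.
  exact: ptraceB_spectrum_gt0 m_gt0 G_unitary lam_gt0 Yu.
by rewrite -rtr_dgm -(rtr_unitary_conj _ Yu) -rhotilE /rhotil rtr_ptraceB rtr_Theta.
Qed.

Lemma entropy_Theta :
  rtr (Theta *m mfun (@ln R) Theta) = \sum_k q k * ln (q k) + \sum_j pB j * ln (pB j).
Proof.
rewrite Theta_spectral (rtr_mul_mfun_conj_dgm _ _ G_unitary).
by apply: entropy_tensf; move=> *; rewrite (boltzmann_gt0, sum_boltzmann).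
Qed.

Lemma klein_guessed_state :
  rtr (rhotil *m mfun (@ln R) rhotil) + rtr (Theta *m (1%:M *t mfun (@ln R) tauB)) <=
  rtr (Theta *m mfun (@ln R) Theta).
Proof.
have [Y [r [Yu rhotilE r_gt0 r1]]] := rhotil_spectral.
have pB_gt0 j : 0 < pB j by exact: boltzmann_gt0.
have sigmaE : rhotil *t tauB = (Y *t Bm)^t* *m dgm (tensf r pB) *m (Y *t Bm).
  by rewrite rhotilE tauB_spectral tens_conj_dgm.
have sum_sigma : \sum_c tensf r pB c = 1 by rewrite sum_tensf r1 sum_boltzmann // mulr1.
have := klein_ineq G_unitary (unitary_tens Yu Bu) Theta_spectral sigmaE lam_gt0
  (tensf_gt0 r_gt0 pB_gt0) sum_lam sum_sigma.
rewrite /relent subr_ge0 (mfun_ln_tens Yu Bu rhotilE tauB_spectral r_gt0 pB_gt0).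
by rewrite mulmxDr rtrD rtr_mul_tens1.
Qed.

Lemma bath_cross_term :
  rtr (Theta *m (1%:M *t mfun (@ln R) tauB)) =
  - beta * rtr ((1%:M *t HB) *m Theta) - ln (partfun beta HB).
Proof.
rewrite /tauB mfun_ln_gibbs // tensmxBr !tensmxZr tensmx11 mulmxBr -!scalemxAr mulmx1.
by rewrite rtrB !rtrZ rtr_Theta mulr1 [rtr (Theta *m _)]rtr_mulC.
Qed.

Lemma bath_entropy :
  \sum_j pB j * ln (pB j) = - beta * rtr (HB *m tauB) - ln (partfun beta HB).
Proof.
rewrite sum_mul_ln_boltzmann ?sum_boltzmann // rtr_mulC tauB_spectral HB_spectral.
by rewrite conj_dgm_mul // (rtr_unitary_conj _ Bu) rtr_dgm partfun_conj_dgm.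
Qed.

Lemma rtr_rhotil : rtr rhotil = 1.
Proof. by rewrite /rhotil rtr_ptraceB rtr_Theta. Qed.

Lemma rtr_rhotil_mul_Ht : rtr (rhotil *m Ht) = \sum_k q k * Et k.
Proof.
rewrite /rhotil /Theta ptraceB_sum mulmx_suml rtr_sum; apply: eq_bigr => k _.
by rewrite -scalemxAl rtrZ rtr_mulC.
Qed.

Lemma rtr_Ht_Phi_tau0 : rtr (Ht *m Phi (gibbs beta H0)) = \sum_k p k * Et k.
Proof.
rewrite tau0_spectral -sum_ketbra_col /Phi channel_sum mulmx_sumr rtr_sum.
by apply: eq_bigr => k _; rewrite -scalemxAr rtrZ.
Qed.

Lemma rtr_H0_tau0 : rtr (H0 *m gibbs beta H0) = \sum_k p k * eps k.
Proof.
rewrite tau0_spectral {1}(eigencols_spectral Vu H0_eigen) (conj_dgm_mul _ _ Vt_unitary).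
by rewrite (rtr_unitary_conj _ Vt_unitary) rtr_dgm; apply: eq_bigr => k _; rewrite mulrC.
Qed.

Lemma gibbs_ineq_initial :
  - beta * rtr (Ht *m Phi (gibbs beta H0)) - ln (\sum_k expR (- beta * Et k)) <=
  - beta * rtr (H0 *m gibbs beta H0) - ln (partfun beta H0).
Proof.
rewrite rtr_Ht_Phi_tau0 rtr_H0_tau0 {1}(eigencols_spectral Vu H0_eigen).
rewrite (partfun_conj_dgm _ _ Vt_unitary) -!sum_mul_ln_boltzmann ?sum_boltzmann //.
by apply: gibbs_ineq => *; rewrite (boltzmann_gt0, sum_boltzmann).
Qed.

Lemma guessed_work_bound :
  free_energy beta Ht - free_energy beta H0 + beta^-1 * relent rhotil (gibbs beta Ht) <=
  (rtr (Ht *m Phi (gibbs beta H0)) - rtr (H0 *m gibbs beta H0)) -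
  (rtr (HB *m tauB) - rtr ((1%:M *t HB) *m Theta)).
Proof.
have := klein_guessed_state.
rewrite bath_cross_term entropy_Theta bath_entropy sum_mul_ln_boltzmann ?sum_boltzmann //.
rewrite -rtr_rhotil_mul_Ht => klein.
have := gibbs_ineq_initial => gibbs0.
rewrite /free_energy /relent rtr_mul_ln_gibbs // rtr_rhotil.
rewrite !mulNr opprK -mulrN -!mulrDr ler_pdivrMl //.
lra.
Qed.

End GuessedWork.

Theorem corollary1 (R : realType) (n m : nat) (hn : (0 < n)%N) (hm : (0 < m)%N)
  (t beta : R) (ht : 0 <= t) (hbeta : 0 < beta)
  (HS : R -> 'M[complex R]_n) (HB : 'M[complex R]_m)
  (U : 'M[complex R]_(n * m))
  (V : 'M[complex R]_n) (eps : 'I_n -> R) :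
  (forall s, 0 <= s <= t -> selfadjmx (HS s)) ->
  selfadjmx HB ->
  U \is unitarymx ->
  (* columns of V: an orthonormal eigenbasis |eps_k> of H_S(0) *)
  V \is unitarymx ->
  (forall k : 'I_n, HS 0 *m col k V = rC (eps k) *: col k V) ->
  let tauB := gibbs beta HB in
  let Phi := channel U tauB in
  let proj := fun k : 'I_n => ketbra (col k V) in
  let Et := fun k : 'I_n => rtr (HS t *m Phi (proj k)) in
  let Ztil := \sum_(k < n) expR (- beta * Et k) in
  let Theta := \sum_(k < n)
      rC (expR (- beta * Et k) / Ztil) *: (U *m (proj k *t tauB) *m U ^t*) in
  let rhotil := ptraceB Theta in
  let Qtil := rtr (HB *m tauB) - rtr ((1%:M *t HB) *m Theta) in
  let dE := rtr (HS t *m Phi (gibbs beta (HS 0))) - rtr (HS 0 *m gibbs beta (HS 0)) in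
  let Wtil := dE - Qtil in
  let dF := free_energy beta (HS t) - free_energy beta (HS 0) in
  dF + beta^-1 * relent rhotil (gibbs beta (HS t)) <= Wtil.
Proof.
move=> HS_selfadj HB_selfadj Uu Vu H0_eigen.
have Ht_selfadj : selfadjmx (HS t) by apply: HS_selfadj; rewrite ht lexx.
have [Bm [b [Bu HB_spectral]]] := selfadj_spectral HB_selfadj.
exact: (guessed_work_bound hn hm hbeta Ht_selfadj Uu Vu Bu H0_eigen HB_spectral).
Qed.
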